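(* Let $\mathcal{C}$ be a non-attacking configuration. Then there exists a constant $\mu$ such that $\mathrm{inloss}_n(\mathcal{C}) \le \mu$ for all $n \in \mathbb{N}$.
   Context: For $n \in \mathbb{N}$ let $I_n = \{\lfloor (2-n)/2 \rfloor, \ldots, \lfloor n/2 \rfloor\}$ and $\mathcal{B}_n = I_n \times I_n$. A configuration is a finite set $\mathcal{C} \subset \mathbb{Z}\times\mathbb{Z}$. For $Q=(x,y)$, $A(Q) = \{(x+i,y),(x,y+i),(x+i,y+i),(x+i,y-i) : i \in \mathbb{Z}\setminus\{0\}\}$ and $A(\mathcal{C}) = \bigcup_{Q\in\mathcal{C}} A(Q)$. $\mathcal{C}$ is non-attacking if $Q'\notin A(Q)$ for all distinct $Q,Q'\in\mathcal{C}$. The attacking number of $s \in \mathbb{Z}^2$ is $a_{\mathcal{C}}(s) = \#\{Q \in \mathcal{C} : s \in A(Q)\}$, and the internal loss is $\mathrm{inloss}_n(\mathcal{C}) = \sum_{s \in A(\mathcal{C})\cap\mathcal{B}_n} (a_{\mathcal{C}}(s) - 1)$. *)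

From HB Require Import structures.
From mathcomp Require Import all_boot all_order all_algebra.
From mathcomp Require Import finmap zify.
Set Implicit Arguments. Unset Strict Implicit. Unset Printing Implicit Defensive.
Import Order.TTheory GRing.Theory Num.Theory.
Local Open Scope fset_scope.

Definition point := (int * int)%type.

Definition I_lo (n : nat) : int := ((2%:Z - n%:Z) %/ 2)%Z.
Definition I_hi (n : nat) : int := (n%:Z %/ 2)%Z.
Definition Iseq (n : nat) : seq int :=
  [seq (I_lo n + k%:Z)%R | k <- iota 0 (absz (I_hi n - I_lo n + 1)%R)].

Definition box (n : nat) : seq point :=
  [seq (a, b) | a <- Iseq n, b <- Iseq n].

(* Q attacks s, i.e. s \in A(Q), where
   A(Q) = {(x+i,y),(x,y+i),(x+i,y+i),(x+i,y-i) : i <> 0}.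
   Boolean rendering: take i := (s.1 - x) (resp. s.2 - y). See attacksP. *)
Definition attacks (Q s : point) : bool :=
  let: (x, y) := Q in let: (a, b) := s in
  [|| (b == y) && (a - x != 0)%R,
      (a == x) && (b - y != 0)%R,
      (a - x == b - y)%R && (a - x != 0)%R
    | (a - x == y - b)%R && (a - x != 0)%R].

Lemma attacksP (Q s : point) :
  attacks Q s <->
  exists i : int, i <> 0%R /\
    (s = (Q.1 + i, Q.2)%R \/ s = (Q.1, Q.2 + i)%R \/
     s = (Q.1 + i, Q.2 + i)%R \/ s = (Q.1 + i, Q.2 - i)%R).
Proof.
case: Q s => x y [a b] /=; split.
- case/or4P => /andP [/eqP e /eqP ne].
  + by exists (a - x)%R; split=> //; left; congr pair; lia.
  + by exists (b - y)%R; split=> //; right; left; congr pair; lia.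
  + by exists (a - x)%R; split=> //; right; right; left; congr pair; lia.
  + by exists (a - x)%R; split=> //; right; right; right; congr pair; lia.
- move=> [i [ni [|[|[|]]]]] [-> ->]; apply/or4P.
  + by constructor 1; apply/andP; split; apply/eqP; lia.
  + by constructor 2; apply/andP; split; apply/eqP; lia.
  + by constructor 3; apply/andP; split; apply/eqP; lia.
  + by constructor 4; apply/andP; split; apply/eqP; lia.
Qed.

Definition nonattacking (C : {fset point}) : Prop :=
  forall Q Q', Q \in C -> Q' \in C -> Q != Q' -> ~~ attacks Q Q'.

Definition attacked (C : {fset point}) (s : point) : bool :=
  [exists Q : C, attacks (val Q) s].

Definition attnum (C : {fset point}) (s : point) : nat :=
  #|` [fset Q in C | attacks Q s] |.

Definition inloss (n : nat) (C : {fset point}) : nat :=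
  \sum_(s <- box n | attacked C s) (attnum C s - 1).

(** Two queens that do not attack each other lie on pairwise distinct lines
    in each of the four directions, so a square they both attack is the
    intersection of two non-parallel lines, one through each queen; hence it
    lies within three times the radius of the configuration.  Only squares
    attacked at least twice contribute to the internal loss, and they form a
    finite set independent of [n]; since the box [B_n] has no repetitions,
    [inloss_n] is bounded by the total excess attack number of that set. *)

From mathcomp Require Import all_boot all_order all_algebra finmap zify.
Import Order.TTheory GRing.Theory Num.Theory.

Lemma leq_sum_support (I : eqType) (r r' : seq I) (F : I -> nat) :
  uniq r -> uniq r' -> (forall i, 0 < F i -> i \in r') ->
  \sum_(i <- r) F i <= \sum_(i <- r') F i.
Proof.
move=> ur ur' suppF.
rewrite (bigID (fun i => 0 < F i)) /= [X in _ + X]big1 => [|i]; last first.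
  by rewrite -leqNgt leqn0 => /eqP.
rewrite addn0 -big_filter.
apply: (@uniq_sub_le_big _ _ leq); rewrite ?filter_uniq //.
- by move=> x y; apply: leq_addr.
- by move=> i; rewrite mem_filter => /andP[/suppF].
Qed.

Local Open Scope ring_scope.

Inductive direction := Horizontal | Vertical | Diagonal | Antidiagonal.

Definition line_coord (d : direction) (p : point) : int :=
  match d with
  | Horizontal => p.2
  | Vertical => p.1
  | Diagonal => p.1 - p.2
  | Antidiagonal => p.1 + p.2
  end.

Lemma attacks_line (Q s : point) :
  attacks Q s <-> Q != s /\ exists d, line_coord d Q = line_coord d s.
Proof.
case: Q s => x y [a b]; split.
- case/or4P=> /andP[/eqP e /eqP ne];
    (split; first by apply/eqP; case=> *; lia).
  + by exists Horizontal.
  + by exists Vertical.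
  + by exists Diagonal => /=; lia.
  + by exists Antidiagonal => /=; lia.
- move=> [ne [d e]]; have {}ne : ~ (x = a /\ y = b).
    by case=> ex ey; move: ne; rewrite ex ey eqxx.
  by apply/or4P; case: d e => /= e;
    [constructor 1 | constructor 2 | constructor 3 | constructor 4];
    apply/andP; split; apply/eqP; lia.
Qed.

Lemma nonattacking_line_coord_neq (d : direction) (Q Q' : point) :
  Q != Q' -> ~~ attacks Q Q' -> line_coord d Q != line_coord d Q'.
Proof.
move=> neQ; apply: contra => /eqP e.
by apply/attacks_line; split; last exists d.
Qed.

Definition in_square (K : nat) (p : point) : bool :=
  (`|p.1| <= K%:Z) && (`|p.2| <= K%:Z).

Lemma lines_meet_in_square (K : nat) (d d' : direction) (Q Q' s : point) :
  d <> d' -> line_coord d Q = line_coord d s -> line_coord d' Q' = line_coord d' s ->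
  in_square K Q -> in_square K Q' -> in_square (3 * K) s.
Proof.
case: Q Q' s => [x y] [x' y'] [a b].
rewrite /in_square /= => + + + /andP[hx hy] /andP[hx' hy'].
by case: d; case: d' => //= _ e e'; apply/andP; split; lia.
Qed.

Lemma common_target_in_square (K : nat) (Q Q' s : point) :
  Q != Q' -> ~~ attacks Q Q' -> attacks Q s -> attacks Q' s ->
  in_square K Q -> in_square K Q' -> in_square (3 * K) s.
Proof.
move=> neQ natt /attacks_line[_ [d e]] /attacks_line[_ [d' e']].
have dd' : d <> d'.
  move=> edd'; have := nonattacking_line_coord_neq d Q Q' neQ natt.
  by rewrite e edd' e' eqxx.
exact: lines_meet_in_square dd' e e'.
Qed.

Lemma mem_Iseq (n : nat) (a : int) : (a \in Iseq n) = (I_lo n <= a <= I_hi n).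
Proof.
apply/mapP/idP => [[k] | ha].
  by rewrite mem_iota /I_lo /I_hi => ? ->; lia.
by exists (absz (a - I_lo n)); move: ha; rewrite ?mem_iota /I_lo /I_hi; lia.
Qed.

Lemma Iseq_uniq (n : nat) : uniq (Iseq n).
Proof. by rewrite map_inj_uniq ?iota_uniq // => i j /=; lia. Qed.

Lemma box_uniq (n : nat) : uniq (box n).
Proof. by rewrite allpairs_uniq ?Iseq_uniq // => -[? ?] [? ?]. Qed.

Lemma mem_box (n : nat) (p : point) :
  (p \in box n) = (p.1 \in Iseq n) && (p.2 \in Iseq n).
Proof.
case: p => a b; apply/allpairsP/andP => [[[a' b'] /= [? ? [-> ->]]] | [? ?]].
  by split.
by exists (a, b).
Qed.

Lemma mem_box_odd (n : nat) (p : point) : (p \in box n.*2.+1) = in_square n p.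
Proof.
have [lo hi] : I_lo n.*2.+1 = - n%:Z /\ I_hi n.*2.+1 = n%:Z by rewrite /I_lo /I_hi; lia.
by rewrite mem_box !mem_Iseq lo hi /in_square !ler_norml.
Qed.

Local Close Scope ring_scope.

Definition radius (C : {fset point}) : nat :=
  \max_(Q <- C) maxn (absz Q.1) (absz Q.2).

Lemma in_square_radius (C : {fset point}) (Q : point) :
  Q \in C -> in_square (radius C) Q.
Proof.
move=> QC; have : (maxn (absz Q.1) (absz Q.2) <= radius C).
  exact: leq_bigmax_seq.
by rewrite /in_square; lia.
Qed.

Lemma two_attackers (C : {fset point}) (s : point) : 1 < attnum C s ->
  exists Q Q', [/\ Q \in C, Q' \in C, Q != Q', attacks Q s & attacks Q' s].
Proof.
rewrite /attnum; set A := [fset Q in C | attacks Q s]%fset => A_gt1.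
have /fset0Pn [Q QA] : A != fset0%fset by rewrite -cardfs_gt0; lia.
have : 0 < #|` (A `\ Q)%fset| by move: A_gt1; rewrite (cardfsD1 Q) QA; lia.
rewrite cardfs_gt0 => /fset0Pn [Q' /fsetD1P [neQ' Q'A]].
move: QA Q'A; rewrite !inE => /andP[QC aQ] /andP[Q'C aQ'].
by exists Q, Q'; split; rewrite // eq_sym.
Qed.

Lemma multiply_attacked_in_square (C : {fset point}) (s : point) :
  nonattacking C -> 1 < attnum C s -> in_square (3 * radius C) s.
Proof.
move=> HC /two_attackers[Q [Q' [QC Q'C neQ aQ aQ']]].
by apply: (common_target_in_square _ _ _ _ neQ (HC _ _ QC Q'C neQ) aQ aQ');
  apply: in_square_radius.
Qed.

Theorem mainTheorem4 (C : {fset point}) :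
  nonattacking C -> exists mu : nat, forall n : nat, inloss n C <= mu.
Proof.
move=> HC; exists (\sum_(s <- box (3 * radius C).*2.+1) (attnum C s - 1)) => n.
rewrite /inloss -big_filter; apply: leq_sum_support.
- by rewrite filter_uniq ?box_uniq.
- exact: box_uniq.
- by move=> s; rewrite subn_gt0 mem_box_odd; apply: multiply_attacked_in_square.
Qed.
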